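(* Consider a one-site PTM cascade with $n\ge1$ layers. Fix all rate constants and all total amounts (all positive) except $\overline{S}_i$ for some $i\in\{1,\dots,n\}$. Then, as $\overline{S}_i$ increases, for each $j\in\{1,\dots,i\}$ the BMSS value of $S_j^1$ strictly increases if $i-j$ is even and strictly decreases if $i-j$ is odd.
   Context: A one-site PTM cascade with $n$ layers has species $E=S_0^1$ and, for $i=1,\dots,n$, $S_i^0,S_i^1,F_i,Y_i^0,Y_i^1$, with reactions $S_{i-1}^1+S_i^0 \rightleftharpoons Y_i^0 \to S_{i-1}^1+S_i^1$ (rate constants $a_i^0,b_i^0,c_i^0$) and $F_i+S_i^1\rightleftharpoons Y_i^1\to F_i+S_i^0$ (rate constants $a_i^1,b_i^1,c_i^1$), all positive, mass-action kinetics. Put $\delta_i=a_i^1/(b_i^1+c_i^1)$, $\gamma_i=(c_i^1/c_i^0)\delta_i$, $\lambda_i=\frac{b_i^0+c_i^0}{a_i^0}\gamma_i$. Given total amounts $\overline{E},\overline{F}_i,\overline{S}_i$, a steady state is a real solution of: $Y_i^0=\gamma_iF_iS_i^1$, $Y_i^1=\delta_iF_iS_i^1$, $\lambda_iF_iS_i^1=S_i^0S_{i-1}^1$, $\overline{F}_i=F_i+Y_i^1$, $\overline{S}_i=S_i^0+S_i^1+Y_i^0+Y_i^1+Y_{i+1}^0$ ($i=1,\dots,n$, $Y_{n+1}^0:=0$), $\overline{E}=E+Y_1^0$. A BMSS is a steady state with positive total amounts and all concentrations nonnegative; for positive total amounts it exists and is unique. *)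

From Stdlib Require Import Reals Lra Arith.
Open Scope R_scope.

(* Layers are indexed by i = 1..n; rate constants a_i^0 etc. and total
   amounts are functions nat -> R (only indices 1..n matter).
   Concentrations: S0 i = S_i^0, S1 i = S_i^1 (with S1 0 = E = S_0^1),
   F i = F_i, Y0 i = Y_i^0, Y1 i = Y_i^1. *)

Definition delta (a1 b1 c1 : nat -> R) (i : nat) : R := a1 i / (b1 i + c1 i).
Definition gamma (c0 a1 b1 c1 : nat -> R) (i : nat) : R :=
  (c1 i / c0 i) * delta a1 b1 c1 i.
Definition lambda (a0 b0 c0 a1 b1 c1 : nat -> R) (i : nat) : R :=
  ((b0 i + c0 i) / a0 i) * gamma c0 a1 b1 c1 i.

(* Y_{i+1}^0 with the convention Y_{n+1}^0 := 0 *)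
Definition Ynext (n : nat) (Y0 : nat -> R) (i : nat) : R :=
  if Nat.ltb i n then Y0 (S i) else 0.

Definition steady_state (n : nat) (a0 b0 c0 a1 b1 c1 : nat -> R)
  (Ebar : R) (Fbar Sbar : nat -> R)
  (S0 S1 F Y0 Y1 : nat -> R) : Prop :=
  (forall i, (1 <= i <= n)%nat ->
     Y0 i = gamma c0 a1 b1 c1 i * F i * S1 i /\
     Y1 i = delta a1 b1 c1 i * F i * S1 i /\
     lambda a0 b0 c0 a1 b1 c1 i * F i * S1 i = S0 i * S1 (i - 1)%nat /\
     Fbar i = F i + Y1 i /\
     Sbar i = S0 i + S1 i + Y0 i + Y1 i + Ynext n Y0 i) /\
  Ebar = S1 0%nat + Y0 1%nat.

Definition is_BMSS (n : nat) (a0 b0 c0 a1 b1 c1 : nat -> R)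
  (Ebar : R) (Fbar Sbar : nat -> R)
  (S0 S1 F Y0 Y1 : nat -> R) : Prop :=
  0 < Ebar /\
  (forall i, (1 <= i <= n)%nat -> 0 < Fbar i /\ 0 < Sbar i) /\
  steady_state n a0 b0 c0 a1 b1 c1 Ebar Fbar Sbar S0 S1 F Y0 Y1 /\
  0 <= S1 0%nat /\
  (forall i, (1 <= i <= n)%nat ->
     0 <= S0 i /\ 0 <= S1 i /\ 0 <= F i /\ 0 <= Y0 i /\ 0 <= Y1 i).

From Stdlib Require Import Reals ROrderedType Lra Lia Psatz.
Open Scope R_scope.

(* Compare the BMSS for Sbar and for Sbar' and record the direction in which each S_k^1 moves
   as [Rcompare (S1 k) (S1' k)].  Conservation of F_k makes the complex amount p_k = F_k S_k^1
   move with S_k^1, and solving the k-th steady-state equation for S_k^0 = λ_k p_k / S_{k-1}^1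
   writes Sbar_k as a quantity increasing in S_k^1 and in Y_{k+1}^0 and decreasing in S_{k-1}^1.
   Conservation of E and of Sbar_k for k < i then forces S_{k-1}^1 and S_k^1 to move in opposite
   directions for k <= i; conservation of Sbar_k for k > i, read backwards from the last layer,
   forces them to move together for k > i; so Y_{i+1}^0 moves with S_i^1 and the increase of
   Sbar_i forces S_i^1 to increase.  The signs alternate from there up to E. *)

Lemma Rcompare_intro u u' v v' :
  (u < u' -> v < v') -> (u = u' -> v = v') -> (u' < u -> v' < v) ->
  Rcompare u u' = Rcompare v v'.
Proof.
  intros Hlt Heq Hgt.
  destruct (Rcompare_spec u u') as [H|H|H];
    [specialize (Heq H) | specialize (Hlt H) | specialize (Hgt H)];
    destruct (Rcompare_spec v v'); (reflexivity || lra).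
Qed.

Section Transfer.
Variables u u' v v' : R.
Hypothesis Huv : Rcompare u u' = Rcompare v v'.

Lemma Rcompare_lt_transfer : u < u' -> v < v'.
Proof. revert Huv; destruct (Rcompare_spec u u'), (Rcompare_spec v v'); (discriminate || lra). Qed.

Lemma Rcompare_gt_transfer : u' < u -> v' < v.
Proof. revert Huv; destruct (Rcompare_spec u u'), (Rcompare_spec v v'); (discriminate || lra). Qed.

Lemma Rcompare_eq_transfer : u = u' -> v = v'.
Proof. revert Huv; destruct (Rcompare_spec u u'), (Rcompare_spec v v'); (discriminate || lra). Qed.

Lemma Rcompare_le_transfer : u <= u' -> v <= v'.
Proof. revert Huv; destruct (Rcompare_spec u u'), (Rcompare_spec v v'); (discriminate || lra). Qed.

Lemma Rcompare_antisym : Rcompare u' u = Rcompare v' v.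
Proof.
  apply Rcompare_intro;
    auto using Rcompare_lt_transfer, Rcompare_gt_transfer, eq_sym, Rcompare_eq_transfer.
Qed.
End Transfer.

Lemma Rcompare_scaled_diff u u' v v' c d : 0 < c -> 0 < d ->
  (u' - u) * c = (v' - v) * d -> Rcompare u u' = Rcompare v v'.
Proof. intros Hc Hd H; apply Rcompare_intro; intro; nra. Qed.

Lemma Rcompare_scale g u u' : 0 < g -> Rcompare u u' = Rcompare (g * u) (g * u').
Proof. intro Hg; apply (Rcompare_scaled_diff _ _ _ _ g 1); lra. Qed.

Lemma Rcompare_exchange u u' v v' : u + v = u' + v' -> Rcompare u u' = Rcompare v' v.
Proof. intro H; apply (Rcompare_scaled_diff _ _ _ _ 1 1); lra. Qed.

Lemma Rcompare_saturation Fb d x x' F F' :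
  0 < Fb -> 0 <= d -> 0 <= x -> 0 <= x' ->
  Fb = F + d * F * x -> Fb = F' + d * F' * x' ->
  Rcompare x x' = Rcompare (F * x) (F' * x').
Proof.
  intros HFb Hd Hx Hx' HF HF'.
  apply (Rcompare_scaled_diff _ _ _ _ Fb ((1 + d * x) * (1 + d * x')));
    [lra | apply Rmult_lt_0_compat; nra |].
  replace ((F' * x' - F * x) * ((1 + d * x) * (1 + d * x')))
    with (F' * (1 + d * x') * x' * (1 + d * x) - F * (1 + d * x) * x * (1 + d * x'))
    by ring.
  replace (F' * (1 + d * x')) with Fb by lra.
  replace (F * (1 + d * x)) with Fb by lra.
  ring.
Qed.

Definition comonotone (x x' y y' : R) : Prop :=
  (x <= x' -> y <= y') /\ (x' <= x -> y' <= y).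

Lemma comonotone_of_Rcompare x x' y y' :
  Rcompare x x' = Rcompare y y' -> comonotone x x' y y'.
Proof.
  intro H; split;
    [exact (Rcompare_le_transfer _ _ _ _ H)
    | exact (Rcompare_le_transfer _ _ _ _ (Rcompare_antisym _ _ _ _ H))].
Qed.

Lemma comonotone_const x x' y : comonotone x x' y y.
Proof. split; intros; lra. Qed.

Section Layer.
Variables l c : R.
Hypotheses (l_gt0 : 0 < l) (c_ge0 : 0 <= c).

(* Sbar_k - Y_{k+1}^0 with a = S_{k-1}^1, x = S_k^1, p = F_k S_k^1, l = λ_k, c = γ_k + δ_k, the
   free S_k^0 being eliminated as l p / a. *)
Definition layer_mass (a x p : R) : R := l * p / a + x + c * p.

Lemma layer_mass_le a a' x x' p p' :
  0 < a' -> a' <= a -> 0 <= p -> p <= p' -> x <= x' ->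
  layer_mass a x p <= layer_mass a' x' p'.
Proof.
  intros Ha' Haa Hp Hpp Hxx; unfold layer_mass.
  assert (l * p / a <= l * p' / a').
  { apply Rmult_le_compat; [nra | left; apply Rinv_0_lt_compat; lra | nra |].
    apply Rinv_le_contravar; lra. }
  nra.
Qed.

Lemma layer_mass_lt a a' x x' p p' :
  0 < a' -> a' <= a -> 0 < p -> p <= p' -> x <= x' -> a' < a \/ x < x' ->
  layer_mass a x p < layer_mass a' x' p'.
Proof.
  intros Ha' Haa Hp Hpp Hxx [Hlt | Hlt].
  - apply Rlt_le_trans with (layer_mass a' x p).
    + unfold layer_mass; apply Rplus_lt_compat_r, Rplus_lt_compat_r.
      apply Rmult_lt_compat_l; [nra | apply Rinv_lt_contravar; nra].
    + apply layer_mass_le; lra.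
  - apply Rle_lt_trans with (layer_mass a' x p').
    + apply layer_mass_le; lra.
    + unfold layer_mass; lra.
Qed.

Section Response.
Variables a a' x x' p p' : R.
Hypotheses (a_gt0 : 0 < a) (a'_gt0 : 0 < a') (p_gt0 : 0 < p) (p'_gt0 : 0 < p').
Hypothesis complex_follows : Rcompare x x' = Rcompare p p'.

Lemma Rcompare_layer_mass : Rcompare x x' = Rcompare a' a ->
  Rcompare x x' = Rcompare (layer_mass a x p) (layer_mass a' x' p').
Proof.
  intro Hxa; apply Rcompare_intro; intro Hx.
  - pose proof (Rcompare_lt_transfer _ _ _ _ Hxa Hx).
    pose proof (Rcompare_lt_transfer _ _ _ _ complex_follows Hx).
    apply layer_mass_lt; lra.
  - rewrite <- (Rcompare_eq_transfer _ _ _ _ Hxa Hx),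
      <- (Rcompare_eq_transfer _ _ _ _ complex_follows Hx), Hx.
    reflexivity.
  - pose proof (Rcompare_gt_transfer _ _ _ _ Hxa Hx).
    pose proof (Rcompare_gt_transfer _ _ _ _ complex_follows Hx).
    apply layer_mass_lt; lra.
Qed.

Lemma layer_next_opposite y y' :
  layer_mass a x p + y = layer_mass a' x' p' + y' ->
  Rcompare x x' = Rcompare a' a -> Rcompare x x' = Rcompare y' y.
Proof.
  intros Htot Hxa; rewrite Rcompare_layer_mass by exact Hxa.
  exact (Rcompare_exchange _ _ _ _ Htot).
Qed.

Lemma layer_prev_follows y y' :
  layer_mass a x p + y = layer_mass a' x' p' + y' ->
  comonotone x x' y y' -> Rcompare x x' = Rcompare a a'.
Proof.
  intros Htot [Hy Hy'].
  assert (Hp : x <= x' -> p <= p') by exact (Rcompare_le_transfer _ _ _ _ complex_follows).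
  assert (Hp' : x' <= x -> p' <= p)
    by exact (Rcompare_le_transfer _ _ _ _ (Rcompare_antisym _ _ _ _ complex_follows)).
  apply Rcompare_intro; intro Hx.
  - destruct (Rlt_le_dec a a') as [|Ha]; [assumption | exfalso].
    assert (layer_mass a x p < layer_mass a' x' p') by (apply layer_mass_lt; auto with real).
    specialize (Hy (Rlt_le _ _ Hx)); lra.
  - destruct (Rtotal_order a a') as [Ha | [Ha | Ha]]; [exfalso | assumption | exfalso].
    + assert (layer_mass a' x' p' < layer_mass a x p) by (apply layer_mass_lt; auto with real; lra).
      specialize (Hy' (Req_le_sym _ _ Hx)); lra.
    + assert (layer_mass a x p < layer_mass a' x' p') by (apply layer_mass_lt; auto with real; lra).
      specialize (Hy (Req_le _ _ Hx)); lra.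
  - destruct (Rlt_le_dec a' a) as [|Ha]; [assumption | exfalso].
    assert (layer_mass a' x' p' < layer_mass a x p) by (apply layer_mass_lt; auto with real).
    specialize (Hy' (Rlt_le _ _ Hx)); lra.
Qed.

Lemma layer_increases y y' :
  layer_mass a x p + y < layer_mass a' x' p' + y' ->
  Rcompare x x' = Rcompare a' a -> comonotone x x' y y' -> x < x'.
Proof.
  intros Htot Hxa [_ Hy'].
  destruct (Rlt_le_dec x x') as [|Hx]; [assumption | exfalso].
  assert (layer_mass a' x' p' <= layer_mass a x p).
  { apply Rcompare_le_transfer with (u := x') (u' := x); [| exact Hx].
    apply Rcompare_antisym, Rcompare_layer_mass, Hxa. }
  specialize (Hy' Hx); lra.
Qed.
End Response.
End Layer.

Section Cascade.
Variables (n : nat) (a0 b0 c0 a1 b1 c1 : nat -> R).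
Hypothesis n_pos : (1 <= n)%nat.
Hypothesis rates_pos : forall k, (1 <= k <= n)%nat ->
  0 < a0 k /\ 0 < b0 k /\ 0 < c0 k /\ 0 < a1 k /\ 0 < b1 k /\ 0 < c1 k.

Local Notation δ := (delta a1 b1 c1).
Local Notation γ := (gamma c0 a1 b1 c1).
Local Notation λ := (lambda a0 b0 c0 a1 b1 c1).

Lemma rate_constants_pos k : (1 <= k <= n)%nat -> 0 < δ k /\ 0 < γ k /\ 0 < λ k.
Proof.
  intro Hk; destruct (rates_pos k Hk) as (? & ? & ? & ? & ? & ?).
  assert (Hd : 0 < δ k) by (apply Rdiv_lt_0_compat; lra).
  assert (Hg : 0 < γ k) by (apply Rmult_lt_0_compat; [apply Rdiv_lt_0_compat; lra | exact Hd]).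
  assert (Hl : 0 < λ k) by (apply Rmult_lt_0_compat; [apply Rdiv_lt_0_compat; lra | exact Hg]).
  auto.
Qed.

Lemma Ynext_last Y0 : Ynext n Y0 n = 0.
Proof. unfold Ynext; rewrite Nat.ltb_irrefl; reflexivity. Qed.

Section SteadyState.
Context {Ebar : R} {Fbar Sbar S0 S1 F Y0 Y1 : nat -> R}.
Hypothesis bmss : is_BMSS n a0 b0 c0 a1 b1 c1 Ebar Fbar Sbar S0 S1 F Y0 Y1.

Lemma bmss_layer_eqs k : (1 <= k <= n)%nat ->
  Y0 k = γ k * F k * S1 k /\ Y1 k = δ k * F k * S1 k /\
  λ k * F k * S1 k = S0 k * S1 (k - 1)%nat /\ Fbar k = F k + Y1 k /\
  Sbar k = S0 k + S1 k + Y0 k + Y1 k + Ynext n Y0 k.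
Proof. destruct bmss as (_ & _ & (Heqs & _) & _); exact (Heqs k). Qed.

Lemma bmss_nonneg k : (1 <= k <= n)%nat ->
  0 <= S0 k /\ 0 <= S1 k /\ 0 <= F k /\ 0 <= Y0 k /\ 0 <= Y1 k.
Proof. destruct bmss as (_ & _ & _ & _ & Hnn); exact (Hnn k). Qed.

Lemma bmss_S1_nonneg k : (k <= n)%nat -> 0 <= S1 k.
Proof.
  intro Hk; destruct k as [| k].
  - destruct bmss as (_ & _ & _ & H0 & _); exact H0.
  - apply bmss_nonneg; lia.
Qed.

Lemma bmss_totals_pos k : (1 <= k <= n)%nat -> 0 < Fbar k /\ 0 < Sbar k.
Proof. destruct bmss as (_ & Htot & _); exact (Htot k). Qed.

Lemma bmss_enzyme_balance : Ebar = S1 0%nat + γ 1%nat * (F 1%nat * S1 1%nat).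
Proof.
  destruct bmss as (_ & _ & (_ & HE) & _).
  rewrite HE, (proj1 (bmss_layer_eqs 1 ltac:(lia))); ring.
Qed.

Lemma bmss_phosphatase_balance k : (1 <= k <= n)%nat ->
  Fbar k = F k + δ k * F k * S1 k.
Proof. intro Hk; destruct (bmss_layer_eqs k Hk) as (_ & HY1 & _ & HF & _); lra. Qed.

Lemma bmss_F_pos k : (1 <= k <= n)%nat -> 0 < F k.
Proof.
  intro Hk; destruct (bmss_nonneg k Hk) as (_ & _ & HF & _).
  destruct (Rle_lt_or_eq_dec _ _ HF) as [| HF0]; [assumption | exfalso].
  pose proof (bmss_phosphatase_balance k Hk) as Hbal.
  rewrite <- HF0 in Hbal.
  pose proof (bmss_totals_pos k Hk); lra.
Qed.

Lemma bmss_S1_succ_eq0 k : (k < n)%nat -> S1 k = 0 -> S1 (S k) = 0.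
Proof.
  intros Hk H0.
  destruct (bmss_layer_eqs (S k) ltac:(lia)) as (_ & _ & Hcx & _).
  rewrite Nat.sub_succ, Nat.sub_0_r, H0, Rmult_0_r in Hcx.
  destruct (rate_constants_pos (S k) ltac:(lia)) as (_ & _ & Hl).
  pose proof (bmss_F_pos (S k) ltac:(lia)).
  pose proof (bmss_S1_nonneg (S k) Hk).
  assert (0 < λ (S k) * F (S k)) by (apply Rmult_lt_0_compat; assumption).
  nra.
Qed.

Lemma bmss_Ynext_succ k : (k < n)%nat -> Ynext n Y0 k = γ (S k) * (F (S k) * S1 (S k)).
Proof.
  intro Hk; unfold Ynext; rewrite (proj2 (Nat.ltb_lt k n) Hk).
  rewrite (proj1 (bmss_layer_eqs (S k) ltac:(lia))); ring.
Qed.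

Lemma bmss_Ynext_eq0 k : (k <= n)%nat -> S1 k = 0 -> Ynext n Y0 k = 0.
Proof.
  intros Hk H0; destruct (Nat.lt_ge_cases k n) as [Hlt | Hge].
  - rewrite bmss_Ynext_succ, bmss_S1_succ_eq0 by assumption; ring.
  - replace k with n by lia; apply Ynext_last.
Qed.

(* If S_k^1 vanished, so would S_k^0 (as S_{k-1}^1 > 0), both complexes and Y_{k+1}^0, emptying
   layer k; for k = 0 the same argument empties E. *)
Lemma bmss_S1_pos k : (k <= n)%nat -> 0 < S1 k.
Proof.
  induction k as [| k IH]; intro Hk;
    destruct (Rle_lt_or_eq_dec _ _ (bmss_S1_nonneg _ Hk)) as [| H0];
    try assumption; exfalso; symmetry in H0.
  - pose proof bmss_enzyme_balance as HE.
    rewrite H0, (bmss_S1_succ_eq0 0 n_pos H0) in HE.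
    destruct bmss as (HEpos & _); lra.
  - destruct (bmss_layer_eqs (S k) ltac:(lia)) as (HY0 & HY1 & Hcx & _ & Htot).
    rewrite Nat.sub_succ, Nat.sub_0_r, H0, Rmult_0_r in Hcx.
    specialize (IH ltac:(lia)).
    assert (HS0 : S0 (S k) = 0)
      by (apply Rmult_eq_reg_r with (S1 k); [rewrite Rmult_0_l | apply Rgt_not_eq]; lra).
    rewrite HS0, HY0, HY1, H0, (bmss_Ynext_eq0 (S k) Hk H0) in Htot.
    pose proof (bmss_totals_pos (S k) ltac:(lia)); lra.
Qed.

Lemma bmss_complex_pos k : (1 <= k <= n)%nat -> 0 < F k * S1 k.
Proof. intro Hk; apply Rmult_lt_0_compat; [apply bmss_F_pos | apply bmss_S1_pos]; lia. Qed.

Lemma bmss_layer_balance k : (k < n)%nat ->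
  Sbar (S k) = layer_mass (λ (S k)) (γ (S k) + δ (S k)) (S1 k) (S1 (S k)) (F (S k) * S1 (S k))
               + Ynext n Y0 (S k).
Proof.
  intro Hk; destruct (bmss_layer_eqs (S k) ltac:(lia)) as (HY0 & HY1 & Hcx & _ & Htot).
  rewrite Nat.sub_succ, Nat.sub_0_r in Hcx.
  pose proof (bmss_S1_pos k ltac:(lia)).
  assert (HS0 : S0 (S k) = λ (S k) * (F (S k) * S1 (S k)) / S1 k).
  { rewrite <- Rmult_assoc, Hcx; field; lra. }
  unfold layer_mass; rewrite Htot, HS0, HY0, HY1; ring.
Qed.

End SteadyState.

Section Comparison.
Context {Ebar : R} {Fbar Sbar Sbar' S0 S1 F Y0 Y1 S0' S1' F' Y0' Y1' : nat -> R}.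
Hypothesis bmss : is_BMSS n a0 b0 c0 a1 b1 c1 Ebar Fbar Sbar S0 S1 F Y0 Y1.
Hypothesis bmss' : is_BMSS n a0 b0 c0 a1 b1 c1 Ebar Fbar Sbar' S0' S1' F' Y0' Y1'.

Lemma Rcompare_complex k : (1 <= k <= n)%nat ->
  Rcompare (S1 k) (S1' k) = Rcompare (F k * S1 k) (F' k * S1' k).
Proof.
  intro Hk; apply (Rcompare_saturation (Fbar k) (δ k)).
  - apply (bmss_totals_pos bmss k Hk).
  - apply Rlt_le, rate_constants_pos, Hk.
  - apply (bmss_S1_nonneg bmss); lia.
  - apply (bmss_S1_nonneg bmss'); lia.
  - apply (bmss_phosphatase_balance bmss k Hk).
  - apply (bmss_phosphatase_balance bmss' k Hk).
Qed.

Lemma Rcompare_Ynext k : (k < n)%nat ->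
  Rcompare (S1 (S k)) (S1' (S k)) = Rcompare (Ynext n Y0 k) (Ynext n Y0' k).
Proof.
  intro Hk; rewrite (bmss_Ynext_succ bmss), (bmss_Ynext_succ bmss'), <- Rcompare_scale
    by (assumption || apply rate_constants_pos; lia).
  apply Rcompare_complex; lia.
Qed.

Lemma comonotone_Ynext k : (k <= n)%nat ->
  ((k < n)%nat -> Rcompare (S1 k) (S1' k) = Rcompare (S1 (S k)) (S1' (S k))) ->
  comonotone (S1 k) (S1' k) (Ynext n Y0 k) (Ynext n Y0' k).
Proof.
  intros Hk Hnext; destruct (Nat.lt_ge_cases k n) as [Hlt | Hge].
  - apply comonotone_of_Rcompare; rewrite (Hnext Hlt); apply Rcompare_Ynext, Hlt.
  - replace k with n by lia; rewrite !Ynext_last; apply comonotone_const.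
Qed.

Lemma layer_data_pos k : (k < n)%nat ->
  0 < λ (S k) /\ 0 <= γ (S k) + δ (S k) /\ 0 < S1 k /\ 0 < S1' k /\
  0 < F (S k) * S1 (S k) /\ 0 < F' (S k) * S1' (S k).
Proof.
  intro Hk; destruct (rate_constants_pos (S k) ltac:(lia)) as (? & ? & ?).
  repeat apply conj;
    [assumption | lra | apply (bmss_S1_pos bmss) | apply (bmss_S1_pos bmss')
    | apply (bmss_complex_pos bmss) | apply (bmss_complex_pos bmss')]; lia.
Qed.

Variable i : nat.
Hypothesis i_range : (1 <= i <= n)%nat.
Hypothesis Sbar_fixed : forall k, (1 <= k <= n)%nat -> k <> i -> Sbar' k = Sbar k.
Hypothesis Sbar_increases : Sbar i < Sbar' i.

Lemma S1_alternates_above k : (k < i)%nat ->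
  Rcompare (S1 k) (S1' k) = Rcompare (S1' (S k)) (S1 (S k)).
Proof.
  induction k as [| k IH]; intro Hk.
  - assert (Hn1 : (1 <= 1 <= n)%nat) by lia.
    rewrite (Rcompare_exchange (S1 0%nat) (S1' 0%nat) (γ 1%nat * (F 1%nat * S1 1%nat))
               (γ 1%nat * (F' 1%nat * S1' 1%nat))).
    + rewrite <- Rcompare_scale by apply (rate_constants_pos 1 Hn1).
      symmetry; apply Rcompare_antisym, Rcompare_complex, Hn1.
    + rewrite <- (bmss_enzyme_balance bmss); apply (bmss_enzyme_balance bmss').
  - destruct (layer_data_pos k ltac:(lia)) as (Hl & Hc & Ha & Ha' & Hp & Hp').
    rewrite (Rcompare_antisym _ _ _ _ (Rcompare_Ynext (S k) ltac:(lia))).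
    apply (layer_next_opposite _ _ Hl Hc _ _ _ _ _ _ Ha Ha' Hp Hp').
    + apply Rcompare_complex; lia.
    + rewrite <- (bmss_layer_balance bmss), <- (bmss_layer_balance bmss') by lia.
      symmetry; apply Sbar_fixed; lia.
    + apply Rcompare_antisym; symmetry; apply IH; lia.
Qed.

Lemma S1_comoves_below k : (i <= k)%nat -> (k < n)%nat ->
  Rcompare (S1 k) (S1' k) = Rcompare (S1 (S k)) (S1' (S k)).
Proof.
  remember (n - S k)%nat as d eqn:Hd; revert k Hd.
  induction d as [| d IH]; intros k Hd Hik Hkn;
    destruct (layer_data_pos k Hkn) as (Hl & Hc & Ha & Ha' & Hp & Hp');
    symmetry; apply (layer_prev_follows _ _ Hl Hc _ _ _ _ _ _ Ha Ha' Hp Hp')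
      with (y := Ynext n Y0 (S k)) (y' := Ynext n Y0' (S k)).
  all: try (apply Rcompare_complex; lia).
  all: try (rewrite <- (bmss_layer_balance bmss), <- (bmss_layer_balance bmss') by lia;
            symmetry; apply Sbar_fixed; lia).
  all: apply comonotone_Ynext; [lia | intro Hlt].
  - lia.
  - apply IH; lia.
Qed.

Lemma S1_increases : S1 i < S1' i.
Proof.
  assert (Hi : i = S (i - 1)) by lia.
  set (m := (i - 1)%nat) in Hi; rewrite Hi.
  destruct (layer_data_pos m ltac:(lia)) as (Hl & Hc & Ha & Ha' & Hp & Hp').
  apply (layer_increases _ _ Hl Hc _ _ _ _ _ _ Ha Ha' Hp Hp')
    with (y := Ynext n Y0 (S m)) (y' := Ynext n Y0' (S m)).
  - apply Rcompare_complex; lia.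
  - rewrite <- (bmss_layer_balance bmss), <- (bmss_layer_balance bmss') by lia.
    rewrite <- Hi; exact Sbar_increases.
  - apply Rcompare_antisym; symmetry; apply S1_alternates_above; lia.
  - apply comonotone_Ynext; [lia | intro; apply S1_comoves_below; lia].
Qed.

Lemma S1_alternates j : (j <= i)%nat ->
  (Nat.Even (i - j) -> S1 j < S1' j) /\ (Nat.Odd (i - j) -> S1' j < S1 j).
Proof.
  remember (i - j)%nat as d eqn:Hd; revert j Hd.
  induction d as [| d IH]; intros j Hd Hj.
  - replace j with i by lia; split; [intros _; exact S1_increases |].
    intros [q Hq]; lia.
  - destruct (IH (S j) ltac:(lia) ltac:(lia)) as [IHeven IHodd].
    pose proof (eq_sym (S1_alternates_above j ltac:(lia))) as Hflip.
    rewrite Nat.Even_succ, Nat.Odd_succ; split; intro Hpar.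
    + exact (Rcompare_lt_transfer _ _ _ _ Hflip (IHodd Hpar)).
    + exact (Rcompare_gt_transfer _ _ _ _ Hflip (IHeven Hpar)).
Qed.
End Comparison.
End Cascade.

Theorem mainTheorem8 :
  forall (n : nat) (a0 b0 c0 a1 b1 c1 : nat -> R) (Ebar : R)
         (Fbar Sbar Sbar' : nat -> R) (i : nat),
    (1 <= n)%nat ->
    (forall k, (1 <= k <= n)%nat ->
       0 < a0 k /\ 0 < b0 k /\ 0 < c0 k /\ 0 < a1 k /\ 0 < b1 k /\ 0 < c1 k) ->
    0 < Ebar ->
    (forall k, (1 <= k <= n)%nat -> 0 < Fbar k /\ 0 < Sbar k /\ 0 < Sbar' k) ->
    (1 <= i <= n)%nat ->
    (forall k, (1 <= k <= n)%nat -> k <> i -> Sbar' k = Sbar k) ->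
    Sbar i < Sbar' i ->
    forall (S0 S1 F Y0 Y1 S0' S1' F' Y0' Y1' : nat -> R),
      is_BMSS n a0 b0 c0 a1 b1 c1 Ebar Fbar Sbar S0 S1 F Y0 Y1 ->
      is_BMSS n a0 b0 c0 a1 b1 c1 Ebar Fbar Sbar' S0' S1' F' Y0' Y1' ->
      forall j, (1 <= j <= i)%nat ->
        (Nat.Even (i - j) -> S1 j < S1' j) /\
        (Nat.Odd (i - j) -> S1' j < S1 j).
Proof.
  intros n a0 b0 c0 a1 b1 c1 Ebar Fbar Sbar Sbar' i Hn Hrates _ _ Hi Hfixed Hincr
    S0 S1 F Y0 Y1 S0' S1' F' Y0' Y1' Hbmss Hbmss' j Hj.
  apply (S1_alternates n a0 b0 c0 a1 b1 c1 Hn Hrates Hbmss Hbmss' i Hi Hfixed Hincr); lia.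
Qed.
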